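(* With the notation below, assume $K=L$ (equivalently $k=\ell$), so that $\mathcal{O}_{\mathrm{mixed}}=\mathcal{O}_\ell$ and $U=\{(a,b)\in\mathcal{O}_\ell\oplus\mathcal{O}_\ell\mid\mathrm{N}(a)+\operatorname{tr}(b)=0\}$. Define $\varphi\colon U\to U$, $\varphi(a,b)=(a,b+f(a))$, and define on $U$ the operation $(x_1,y_1)\,\tilde{+}\,(x_2,y_2)=(x_1+x_2,\ y_1+y_2+\overline{x_2}\cdot x_1)$ and the map $\tilde\tau(x,y)=(x\cdot y^{-1},\ y^{-1})$ on $U\setminus\{(0,0)\}$. Then $\varphi$ is a bijection of $U$ with $\varphi((a,b)+(c,d))=\varphi(a,b)\,\tilde{+}\,\varphi(c,d)$ for all $(a,b),(c,d)\in U$ and $\varphi\circ\tau=\tilde\tau\circ\varphi$ on $U\setminus\{(0,0)\}$. Consequently $\mathbb{M}(U,\tau)\cong\mathbb{M}((U,\tilde +),\tilde\tau)$, the algebraic Moufang set of type $\mathsf{F}_4$ associated with the octonion division algebra $\mathcal{O}_\ell$.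
   Context: Let $k\subseteq\ell$ be fields of characteristic $2$ with $\ell^2\subseteq k$. Let $\delta\in k$ be such that $x^2+x+\delta$ is irreducible over $\ell$, $\gamma$ a root, $K=k(\gamma)$, $L=\ell(\gamma)$, and $t\mapsto\overline{t}$ the nontrivial automorphism of $L/\ell$. Fix $\alpha,\beta\in k^\times$ such that the norm below is anisotropic on $\mathcal{O}_{\mathrm{mixed}}$. Let $\mathcal{O}_\ell=L^4$ with multiplication $x\cdot y=\bigl(x_1y_1+\alpha\overline{x_2}y_2+\beta\overline{x_3}y_3+\alpha\beta\overline{x_4}y_4,\ x_2y_1+\overline{x_1}y_2+\beta x_4\overline{y_3}+\beta\overline{x_3}y_4,\ x_3y_1+\overline{x_1}y_3+\alpha x_4\overline{y_2}+\alpha\overline{x_2}y_4,\ x_3y_2+x_2y_3+x_4\overline{y_1}+x_1y_4\bigr)$, conjugation $\overline{x}=(\overline{x_1},x_2,x_3,x_4)$, norm $\mathrm{N}(x)=x_1\overline{x_1}+\alpha x_2\overline{x_2}+\beta x_3\overline{x_3}+\alpha\beta x_4\overline{x_4}$, inverse $x^{-1}=\mathrm{N}(x)^{-1}\overline{x}$, trace $\operatorname{tr}(x)=x_1+\overline{x_1}$; elements $c\in L$ are identified with $(c,0,0,0)$. Let $\mathcal{O}_{\mathrm{mixed}}=L\oplus K^3$. Define $f(a_1,a_2,a_3,a_4)=\bigl(\mathrm{N}(a),\ a_1a_2+\beta\overline{a_3}a_4,\ a_1a_3+\alpha\overline{a_2}a_4,\ a_2a_3+\overline{a_1}a_4\bigr)$,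 $g(a,c)=\overline{a_1}c_1+\alpha\overline{a_2}c_2+\beta\overline{a_3}c_3+\alpha\beta\overline{a_4}c_4$, $U=\{(a,b)\in\mathcal{O}_\ell\oplus\mathcal{O}_{\mathrm{mixed}}\mid\mathrm{N}(a)+\operatorname{tr}(b)=0\}$ with $(a,b)+(c,d)=(a+c,b+d+g(a,c))$, and $\tau(a,b)=\bigl(a\cdot(b+f(a))^{-1},\ (b+f(a))^{-1}+f(a\cdot(b+f(a))^{-1})\bigr)$ for $(a,b)\neq(0,0)$. For a group $U$ and permutation $\tau$ of $U\setminus\{0\}$, $\mathbb{M}(U,\tau)$ is the structure on $X=U\cup\{\infty\}$ with $U_\infty=\{x\mapsto x+a\}$ (fixing $\infty$), $U_0=\tau^{-1}U_\infty\tau$ (with $\tau$ extended by $0\leftrightarrow\infty$), and $U_a$ the conjugate of $U_0$ by $x\mapsto x+a$. Isomorphism of such structures means a bijection of the underlying sets carrying root groups to root groups. *)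

From HB Require Import structures.
From mathcomp Require Import all_boot all_order all_algebra.
Set Implicit Arguments. Unset Strict Implicit. Unset Printing Implicit Defensive.
Import GRing.Theory.
Local Open Scope ring_scope.

(* Carrier X = option T, where None plays the role of infinity.              *)
(* Permutations act on the right (exponential notation), so for a bijection  *)
(* s, the conjugate s^-1 G s is {x |-> s (g (s^-1 x))}; we express           *)
(* "h = s o g o s^-1" as "h o s = s o g" (equivalent for bijective s).       *)

Definition ext_tau (T : eqType) (z : T) (tau : T -> T) (x : option T) : option T :=
  match x with
  | None => Some z
  | Some y => if y == z then None else Some (tau y)
  end.

Definition transl (T : Type) (add : T -> T -> T) (a : T) (x : option T) : option T :=
  match x with None => None | Some y => Some (add y a) end.

Definition root_inf (T : Type) (add : T -> T -> T) (h : option T -> option T) : Prop :=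
  exists a : T, h = transl add a.

(* U_0 = tau^-1 U_infinity tau *)
Definition root_zero (T : eqType) (z : T) (add : T -> T -> T) (tau : T -> T)
  (h : option T -> option T) : Prop :=
  exists g, root_inf add g /\ h \o ext_tau z tau = ext_tau z tau \o g.

Definition root_grp (T : eqType) (z : T) (add : T -> T -> T) (tau : T -> T)
  (x : option T) (h : option T -> option T) : Prop :=
  match x with
  | None => root_inf add h
  | Some a => exists h0, root_zero z add tau h0 /\
                 h \o transl add a = transl add a \o h0
  end.

(* isomorphism of M(U,tau) onto M(U',tau'): a bijection psi of the carriers *)
(* with psi U_x psi^-1 = U'_(psi x) for every x.                           *)
Definition moufang_iso (T T' : eqType) (z : T) (add : T -> T -> T) (tau : T -> T)
  (z' : T') (add' : T' -> T' -> T') (tau' : T' -> T')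
  (psi : option T -> option T') : Prop :=
  bijective psi /\
  forall (x : option T) (h' : option T' -> option T'),
    root_grp z' add' tau' (psi x) h' <->
    exists h, root_grp z add tau x h /\ h' \o psi = psi \o h.

Definition moufang_isomorphic (T T' : eqType) (z : T) (add : T -> T -> T)
  (tau : T -> T) (z' : T') (add' : T' -> T' -> T') (tau' : T' -> T') : Prop :=
  exists psi, moufang_iso z add tau z' add' tau' psi.

(* The quadratic extension L = l(gamma), gamma^2 + gamma + d = 0, char 2.    *)
(* An element u + v*gamma is represented by the pair (u, v).                 *)
Section Octonions.
Variable F : fieldType.
Variables (d al be : F).

Definition Lt : Type := (F * F)%type.
Definition Lzero : Lt := (0, 0).
Definition Lof (c : F) : Lt := (c, 0).
Definition Ladd (x y : Lt) : Lt := (x.1 + y.1, x.2 + y.2).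
(* gamma^2 = gamma + d  (characteristic 2) *)
Definition Lmul (x y : Lt) : Lt :=
  (x.1 * y.1 + d * (x.2 * y.2), x.1 * y.2 + x.2 * y.1 + x.2 * y.2).
(* nontrivial automorphism: gamma |-> gamma + 1 *)
Definition Lconj (x : Lt) : Lt := (x.1 + x.2, x.2).
(* field inverse in L: x^-1 = conj x / (x * conj x) *)
Definition Linv (x : Lt) : Lt :=
  let n := x.1 * x.1 + x.1 * x.2 + d * (x.2 * x.2) in
  (n^-1 * (x.1 + x.2), n^-1 * x.2).

Definition Ot : Type := (Lt * Lt * Lt * Lt)%type.
Definition mkO (x1 x2 x3 x4 : Lt) : Ot := (x1, x2, x3, x4).
Definition o1 (x : Ot) : Lt := x.1.1.1.
Definition o2 (x : Ot) : Lt := x.1.1.2.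
Definition o3 (x : Ot) : Lt := x.1.2.
Definition o4 (x : Ot) : Lt := x.2.
Definition Ozero : Ot := mkO Lzero Lzero Lzero Lzero.
Definition OofL (c : Lt) : Ot := mkO c Lzero Lzero Lzero.
Definition Oadd (x y : Ot) : Ot :=
  mkO (Ladd (o1 x) (o1 y)) (Ladd (o2 x) (o2 y)) (Ladd (o3 x) (o3 y)) (Ladd (o4 x) (o4 y)).

Declare Scope oct_scope.
Local Notation "x + y" := (Ladd x y) : oct_scope.
Local Notation "x * y" := (Lmul x y) : oct_scope.
Local Notation "x ^*" := (Lconj x) : oct_scope.
Local Notation A := (Lof al).
Local Notation B := (Lof be).
Local Notation AB := (Lof (al * be)).
Local Open Scope oct_scope.

Definition Omul (x y : Ot) : Ot :=
  let: (x1, x2, x3, x4) := x in let: (y1, y2, y3, y4) := y in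
  mkO (x1 * y1 + A * (x2^* * y2) + B * (x3^* * y3) + AB * (x4^* * y4))
      (x2 * y1 + x1^* * y2 + B * (x4 * y3^*) + B * (x3^* * y4))
      (x3 * y1 + x1^* * y3 + A * (x4 * y2^*) + A * (x2^* * y4))
      (x3 * y2 + x2 * y3 + x4 * y1^* + x1 * y4).

Definition Oconj (x : Ot) : Ot := mkO (o1 x)^* (o2 x) (o3 x) (o4 x).

Definition Onorm (x : Ot) : Lt :=
  o1 x * (o1 x)^* + A * (o2 x * (o2 x)^*) + B * (o3 x * (o3 x)^*)
  + AB * (o4 x * (o4 x)^*).

(* x^-1 = N(x)^-1 * conj x, with N(x)^-1 in L identified with (N(x)^-1,0,0,0) *)
Definition Oinv (x : Ot) : Ot := Omul (OofL (Linv (Onorm x))) (Oconj x).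

Definition Otr (x : Ot) : Lt := o1 x + (o1 x)^*.

Definition ff (a : Ot) : Ot :=
  mkO (Onorm a)
      (o1 a * o2 a + B * ((o3 a)^* * o4 a))
      (o1 a * o3 a + A * ((o2 a)^* * o4 a))
      (o2 a * o3 a + (o1 a)^* * o4 a).

Definition gg (a c : Ot) : Lt :=
  (o1 a)^* * o1 c + A * ((o2 a)^* * o2 c) + B * ((o3 a)^* * o3 c)
  + AB * ((o4 a)^* * o4 c).

Local Close Scope oct_scope.

Definition Pt : Type := (Ot * Ot)%type.
Definition Pzero : Pt := (Ozero, Ozero).
Definition inU (p : Pt) : bool := Ladd (Onorm p.1) (Otr p.2) == Lzero.

Definition Uadd (p q : Pt) : Pt :=
  (Oadd p.1 q.1, Oadd (Oadd p.2 q.2) (OofL (gg p.1 q.1))).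

Definition Utau (p : Pt) : Pt :=
  let w := Oinv (Oadd p.2 (ff p.1)) in
  let a' := Omul p.1 w in (a', Oadd w (ff a')).

Definition phi (p : Pt) : Pt := (p.1, Oadd p.2 (ff p.1)).

Definition Utadd (p q : Pt) : Pt :=
  (Oadd p.1 q.1, Oadd (Oadd p.2 q.2) (Omul (Oconj q.1) p.1)).

Definition Uttau (p : Pt) : Pt := (Omul p.1 (Oinv p.2), Oinv p.2).

Definition UT : Type := {p : Pt | inU p}.

Lemma inU_zero : inU Pzero.
Proof.
by rewrite /inU /Pzero /Ozero /Onorm /Otr /Lzero /Ladd /Lmul /Lconj /Lof
  /mkO /o1 /o2 /o3 /o4 /= !(mul0r, mulr0, addr0).
Qed.

Definition U0 : UT := exist _ Pzero inU_zero.

(* operations transported to the subtype U (closure of U under these       *)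
(* operations holds; insubd only provides a formal default value)          *)
Definition liftU2 (h : Pt -> Pt -> Pt) (u v : UT) : UT := insubd u (h (val u) (val v)).
Definition liftU1 (h : Pt -> Pt) (u : UT) : UT := insubd u (h (val u)).

Definition addU := liftU2 Uadd.
Definition tauU := liftU1 Utau.
Definition taddU := liftU2 Utadd.
Definition ttauU := liftU1 Uttau.

End Octonions.

From HB Require Import structures.
From mathcomp Require Import all_boot all_order all_algebra.
From Stdlib Require Import Ring FunctionalExtensionality.
Import GRing.Theory.
Local Open Scope ring_scope.

(* The map phi(a,b) = (a, b + f(a)) is an involution of O_l (+) O_l, since   *)
(* the characteristic is 2, and the whole theorem rests on two identities:   *)
(*  - the polarisation of f:  f(a + c) = f(a) + f(c) + g(a,c) + conj(c) a,    *)
(*    which turns the group law (a,b) + (c,d) of U into the law ~+;          *)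
(*  - tr(f(a)) = N(a) + conj(N(a)) = 0, because N takes values in l, so phi   *)
(*    preserves the defining equation N(a) + tr(b) = 0 of U.                 *)
(* Compatibility with tau is then formal: writing w = (b + f(a))^-1 and      *)
(* a' = a w, phi(tau(a,b)) = (a', w + f(a') + f(a')) = (a', w) = ~tau(a,b+f(a)). *)
(* The remaining hypotheses of the theorem (irreducibility, anisotropy,      *)

(* Keep [/=] from unfolding the arithmetic of L, so that octonion identities *)
(* are rewritten and normalised at the level of L.                           *)
Arguments Ladd : simpl never.
Arguments Lmul : simpl never.
Arguments Lconj : simpl never.
Arguments Lof : simpl never.
Arguments Lzero : simpl never.

Section Char2Identities.
Variable F : fieldType.
Hypothesis charF2 : 2%N \in [pchar F].
Variables (d al be : F).

(* Stdlib's [ring] accepts a custom ring of coefficients, here GF(2), but it *)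
(* recognises operations syntactically; routing the field operations of F   *)
(* through these aliases gives it a stable form to reify.                   *)
Definition zeroF : F := 0.
Definition oneF : F := 1.
Definition addF (x y : F) : F := x + y.
Definition mulF (x y : F) : F := x * y.
Definition oppF (x : F) : F := - x.
Definition subF (x y : F) : F := addF x (oppF y).
Arguments zeroF : simpl never. Arguments oneF : simpl never.
Arguments addF : simpl never. Arguments mulF : simpl never.
Arguments oppF : simpl never. Arguments subF : simpl never.

Lemma F_ring_theory : ring_theory zeroF oneF addF mulF subF oppF eq.
Proof.
rewrite /zeroF /oneF /addF /mulF /subF /oppF.
split=> *; rewrite ?(add0r, mul1r, subrr) //.
- exact: addrC.
- exact: addrA.
- exact: mulrC.
- exact: mulrA.
- exact: mulrDl.
Qed.

(* The prime field of F is GF(2) = bool: coefficients are computed mod 2,   *)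
(* which is what makes identities valid only in characteristic 2 provable.  *)
Definition bool_to_F (b : bool) : F := if b then oneF else zeroF.

Lemma F_bool_morph : ring_morph zeroF oneF addF mulF subF oppF eq
  false true xorb andb xorb id Bool.eqb bool_to_F.
Proof.
have oneN : - 1 = 1 :> F := oppr_pchar2 charF2 1.
have oneD : 1 + 1 = 0 :> F := addrr_pchar2 charF2 1.
rewrite /bool_to_F /subF /zeroF /oneF /addF /mulF /oppF.
by split=> //=; repeat case=> //;
  rewrite /= ?(addr0, add0r, subr0, sub0r, oppr0, subrr, mulr1, mulr0, oneN, oneD).
Qed.

Ltac F_const t :=
  match t with zeroF => constr:(false) | oneF => constr:(true) | _ => constr:(NotConstant) end.

Add Ring F_char2 : F_ring_theory (morphism F_bool_morph, constants [F_const]).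

Definition Lone : Lt F := Lof 1.
Definition Lopp (x : Lt F) : Lt F := x.
Definition Lsub (x y : Lt F) : Lt F := Ladd x y.

Ltac L_ring :=
  repeat match goal with x : Lt F |- _ => destruct x end;
  rewrite /Lsub /Lopp /Lone /Ladd /Lmul /Lzero /Lof /Lconj /=;
  rewrite -?[_ + _]/(addF _ _) -?[_ * _]/(mulF _ _) -?[0]/zeroF -?[1]/oneF;
  f_equal; ring.

Lemma L_ring_theory : ring_theory (Lzero F) Lone (@Ladd F) (@Lmul F d) Lsub Lopp eq.
Proof. by split=> *; L_ring. Qed.

Definition bool_to_L (b : bool) : Lt F := if b then Lone else Lzero F.

Lemma L_bool_morph : ring_morph (Lzero F) Lone (@Ladd F) (@Lmul F d) Lsub Lopp eq
  false true xorb andb xorb id Bool.eqb bool_to_L.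
Proof. by split=> //=; repeat case=> //; rewrite /bool_to_L /=; L_ring. Qed.

Ltac L_const t :=
  match t with Lzero F => constr:(false) | Lone => constr:(true) | _ => constr:(NotConstant) end.

Add Ring L_char2 : L_ring_theory (morphism L_bool_morph, constants [L_const]).

Lemma Ladd0 (x : Lt F) : Ladd x (Lzero F) = x.
Proof. L_ring. Qed.

Lemma Lconj_add (x y : Lt F) : Lconj (Ladd x y) = Ladd (Lconj x) (Lconj y).
Proof. L_ring. Qed.

Lemma Lconj_mul (x y : Lt F) : Lconj (Lmul d x y) = Lmul d (Lconj x) (Lconj y).
Proof. L_ring. Qed.

Lemma Lconj_involutive (x : Lt F) : Lconj (Lconj x) = x.
Proof. L_ring. Qed.

Lemma Lconj_of (c : F) : Lconj (Lof c) = Lof c.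
Proof. L_ring. Qed.

Ltac O_ring :=
  repeat match goal with
  | x : Pt _ |- _ => destruct x
  | x : Ot _ |- _ => destruct x as [[[? ?] ?] ?]
  end;
  rewrite /phi /Uadd /Utadd /Pzero /ff /gg /Onorm /Oconj /Otr /OofL /Oadd /Omul
          /Ozero /mkO /o1 /o2 /o3 /o4 /=;
  rewrite ?(Lconj_add, Lconj_mul, Lconj_involutive, Lconj_of);
  repeat match goal with |- (_, _) = (_, _) => f_equal end;
  ring.

Lemma Oadd_cancel (x y : Ot F) : Oadd (Oadd x y) y = x.
Proof. O_ring. Qed.

Lemma ff_polar (a c : Ot F) :
  ff d al be (Oadd a c) =
  Oadd (Oadd (ff d al be a) (ff d al be c))
       (Oadd (OofL (gg d al be a c)) (Omul d al be (Oconj c) a)).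
Proof. O_ring. Qed.

Lemma Onorm_conj (a : Ot F) : Lconj (Onorm d al be a) = Onorm d al be a.
Proof. O_ring. Qed.

Lemma Otr_add (x y : Ot F) : Otr (Oadd x y) = Ladd (Otr x) (Otr y).
Proof. O_ring. Qed.

Lemma Otr_ff (a : Ot F) : Otr (ff d al be a) = Lzero F.
Proof.
rewrite /Otr {2}/ff /o1 /= Onorm_conj.
by set n := Onorm d al be a; ring.
Qed.

Lemma phi_involutive : involutive (phi d al be).
Proof. by case=> a b; rewrite /phi /= Oadd_cancel. Qed.

Lemma phi_zero : phi d al be (Pzero F) = Pzero F.
Proof. O_ring. Qed.

Lemma inU_phi (p : Pt F) : inU d al be (phi d al be p) = inU d al be p.
Proof.
by case: p => a b; rewrite /inU /phi /= Otr_add Otr_ff Ladd0.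
Qed.

Lemma phi_preserves_U {p : Pt F} : inU d al be p -> inU d al be (phi d al be p).
Proof. by rewrite inU_phi. Qed.

Lemma phi_add (p q : Pt F) :
  phi d al be (Uadd d al be p q) = Utadd d al be (phi d al be p) (phi d al be q).
Proof.
case: p q => [a b] [c e]; rewrite /phi /Uadd /Utadd ff_polar; congr pair.
move: (ff d al be a) (ff d al be c) (OofL (gg d al be a c)) (Omul d al be (Oconj c) a).
by move=> fa fc gac ca; O_ring.
Qed.

Lemma phi_tau (p : Pt F) :
  phi d al be (Utau d al be p) = Uttau d al be (phi d al be p).
Proof. by case: p => a b; rewrite /phi /Utau /Uttau /= Oadd_cancel. Qed.

Definition phiU (u : UT d al be) : UT d al be :=
  exist (fun p => inU d al be p) (phi d al be (val u)) (phi_preserves_U (valP u)).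

Lemma phiU_involutive : involutive phiU.
Proof. by move=> u; apply: val_inj; rewrite /= phi_involutive. Qed.

Lemma phiU_zero : phiU (U0 d al be) = U0 d al be.
Proof. by apply: val_inj; rewrite /= phi_zero. Qed.

(* The lifted operations of U are given by insubd, whose default value is *)
(* never used here because phi preserves U.                              *)
Lemma phiU_add (u v : UT d al be) : phiU (addU u v) = taddU (phiU u) (phiU v).
Proof.
apply: val_inj; rewrite /= /addU /taddU /liftU2 !val_insubd /= -phi_add inU_phi.
by case: ifP.
Qed.

Lemma phiU_tau (u : UT d al be) : phiU (tauU u) = ttauU (phiU u).
Proof.
apply: val_inj; rewrite /= /tauU /ttauU /liftU1 !val_insubd /= -phi_tau inU_phi.
by case: ifP.
Qed.

End Char2Identities.

Section Transport.
Variables (T T' : eqType) (z : T) (add : T -> T -> T) (tau : T -> T)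
  (z' : T') (add' : T' -> T' -> T') (tau' : T' -> T')
  (f : T -> T') (g : T' -> T).
Hypotheses (fK : cancel f g) (gK : cancel g f) (f_zero : f z = z')
  (f_add : forall a b, f (add a b) = add' (f a) (f b))
  (f_tau : forall a, f (tau a) = tau' (f a)).

Let psi := omap f.
Let psi_inv := omap g.
Let psiK : cancel psi psi_inv. Proof. by case=> //= x; rewrite fK. Qed.
Let psi_invK : cancel psi_inv psi. Proof. by case=> //= x; rewrite gK. Qed.

Let cnj (h : option T -> option T) := psi \o h \o psi_inv.
Let cnj_inv (h : option T' -> option T') := psi_inv \o h \o psi.

Let cnjK h' : cnj (cnj_inv h') = h'.
Proof. by apply: functional_extensionality => x; rewrite /cnj /cnj_inv /= !psi_invK. Qed.

Let cnj_invK h : cnj_inv (cnj h) = h.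
Proof. by apply: functional_extensionality => x; rewrite /cnj /cnj_inv /= !psiK. Qed.

Let cnj_inj : injective cnj. Proof. exact: can_inj cnj_invK. Qed.

Let cnjM h1 h2 : cnj (h1 \o h2) = cnj h1 \o cnj h2.
Proof. by apply: functional_extensionality => x; rewrite /cnj /= psiK. Qed.

Let intertwineE h h' : h' \o psi = psi \o h <-> h' = cnj h.
Proof.
split=> [E|->]; apply: functional_extensionality => y; rewrite /cnj /=.
- by rewrite -[in LHS](psi_invK y) -[h' _]/((h' \o psi) _) E.
- by rewrite psiK.
Qed.

Let cnj_transl a : cnj (transl add a) = transl add' (f a).
Proof. by apply: functional_extensionality => -[x|] //=; rewrite /cnj /= f_add gK. Qed.

Let cnj_ext_tau : cnj (ext_tau z tau) = ext_tau z' tau'.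
Proof.
apply: functional_extensionality => -[x|] /=; rewrite /cnj /=; last by rewrite f_zero.
have -> : (x == z') = (g x == z) by rewrite -f_zero -(inj_eq (can_inj fK)) gK.
by case: (g x == z) => //=; rewrite f_tau gK.
Qed.

Let cnj_commute h x k : (cnj h \o cnj x = cnj x \o cnj k) <-> (h \o x = x \o k).
Proof. by rewrite -!cnjM; split=> [/cnj_inj|->]. Qed.

Let cnj_root_inf h : root_inf add' (cnj h) <-> root_inf add h.
Proof.
split=> [[a' E]|[a ->]]; last by exists (f a); rewrite cnj_transl.
by exists (g a'); apply: cnj_inj; rewrite E cnj_transl gK.
Qed.

Let cnj_root_zero h : root_zero z' add' tau' (cnj h) <-> root_zero z add tau h.
Proof.
split=> [[g' [Hg E]]|[g0 [Hg E]]].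
- exists (cnj_inv g'); split; first by apply/cnj_root_inf; rewrite cnjK.
  by apply/cnj_commute; rewrite cnjK cnj_ext_tau.
- exists (cnj g0); split; first by apply/cnj_root_inf.
  by rewrite -cnj_ext_tau; apply/cnj_commute.
Qed.

Let cnj_root_grp x h : root_grp z' add' tau' (psi x) (cnj h) <-> root_grp z add tau x h.
Proof.
case: x => [a|] /=; last exact: cnj_root_inf.
split=> [[h0' [Hh E]]|[h0 [Hh E]]].
- exists (cnj_inv h0'); split; first by apply/cnj_root_zero; rewrite cnjK.
  by apply/cnj_commute; rewrite cnjK cnj_transl.
- exists (cnj h0); split; first by apply/cnj_root_zero.
  by rewrite -cnj_transl; apply/cnj_commute.
Qed.

Lemma moufang_isomorphic_transport : moufang_isomorphic z add tau z' add' tau'.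
Proof.
exists psi; split; first by exists psi_inv.
move=> x h'; split=> [Hh'|[h [Hh /intertwineE ->]]]; last exact/cnj_root_grp.
exists (cnj_inv h'); split; first by apply/cnj_root_grp; rewrite cnjK.
by apply/intertwineE; rewrite cnjK.
Qed.

End Transport.

Arguments moufang_isomorphic_transport {T T' z add tau z' add' tau' f g}.

Theorem mainTheorem12 (F : fieldType) (d al be : F) :
  2%N \in [pchar F] ->
  irreducible_poly ('X^2 + 'X + d%:P) ->
  al != 0 -> be != 0 ->
  (forall x : Ot F, Onorm d al be x = Lzero F -> x = Ozero F) ->
  (forall p, inU d al be p -> inU d al be (phi d al be p)) /\
      (forall p q, inU d al be p -> inU d al be q ->
                   phi d al be p = phi d al be q -> p = q) /\
      (forall q, inU d al be q -> exists2 p, inU d al be p & phi d al be p = q) /\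
      (forall p q, inU d al be p -> inU d al be q ->
         phi d al be (Uadd d al be p q) = Utadd d al be (phi d al be p) (phi d al be q)) /\
      (forall p, inU d al be p -> p != Pzero F ->
         phi d al be (Utau d al be p) = Uttau d al be (phi d al be p)) /\
    moufang_isomorphic (@U0 _ d al be) (@addU _ d al be) (@tauU _ d al be)
                         (@U0 _ d al be) (@taddU _ d al be) (@ttauU _ d al be).
Proof.
move=> charF2 _ _ _ _.
have phiK := phi_involutive F charF2 d al be.
split; first exact: phi_preserves_U.
split; first by move=> p q _ _ /(can_inj phiK).
split; first by move=> q Uq; exists (phi d al be q); [exact: phi_preserves_U | rewrite phiK].
split; first by move=> p q _ _; apply: phi_add.
split; first by move=> p _ _; apply: phi_tau.
have phiUK := phiU_involutive F charF2 d al be.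
exact: (moufang_isomorphic_transport phiUK phiUK (phiU_zero F charF2 d al be)
          (phiU_add F charF2 d al be) (phiU_tau F charF2 d al be)).
Qed.
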